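(* Let $\mathbf{u}\in[-1,1]^m$ satisfy $\langle\mathbf{1},\mathbf{u}\rangle=0$, and let $\mathcal{P}=\{\mathbf{p}\in[0,2]^m:\langle\mathbf{1},\mathbf{p}\rangle=m\}$. Consider the two-player zero-sum game $\Gamma_0$ in which the principal chooses $\mathbf{p}\in\mathcal{P}$, the agent chooses $\mathbf{x}\in\Delta(m)$, the agent's utility is $\langle\mathbf{u}+\mathbf{p},\mathbf{x}\rangle$ and the principal's utility is $-\langle\mathbf{u}+\mathbf{p},\mathbf{x}\rangle$. Then in every $\varepsilon$-Nash equilibrium $(\mathbf{p},\mathbf{x})$ of $\Gamma_0$, the principal's strategy has the form $\mathbf{p}=\mathbf{1}-\mathbf{u}+\mathbf{z}$ with $\|\mathbf{z}\|_1\le 4m\varepsilon$.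
   Context: $\mathbf{1}$ is the all-ones vector in $\mathbb{R}^m$ and $\Delta(m)$ is the probability simplex. An $\varepsilon$-Nash equilibrium is a pair in which neither player can gain more than $\varepsilon$ by a unilateral deviation. *)

From HB Require Import structures.
From mathcomp Require Import all_boot all_order all_algebra.
Set Implicit Arguments. Unset Strict Implicit. Unset Printing Implicit Defensive.
Import Order.TTheory GRing.Theory Num.Theory.
Local Open Scope ring_scope.

Definition dotv (R : realFieldType) (m : nat) (a b : 'rV[R]_m) : R :=
  \sum_(i < m) a 0 i * b 0 i.

Definition ones (R : realFieldType) (m : nat) : 'rV[R]_m := const_mx 1.

Definition norm1 (R : realFieldType) (m : nat) (z : 'rV[R]_m) : R :=
  \sum_(i < m) `|z 0 i|.

Definition in_simplex (R : realFieldType) (m : nat) (x : 'rV[R]_m) : Prop :=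
  (forall i, 0 <= x 0 i) /\ \sum_(i < m) x 0 i = 1.

Definition in_P (R : realFieldType) (m : nat) (p : 'rV[R]_m) : Prop :=
  (forall i, 0 <= p 0 i <= 2) /\ dotv (ones R m) p = m%:R.

Definition agent_util (R : realFieldType) (m : nat) (u p x : 'rV[R]_m) : R :=
  dotv (u + p) x.
Definition principal_util (R : realFieldType) (m : nat) (u p x : 'rV[R]_m) : R :=
  - dotv (u + p) x.

Definition eps_Nash (R : realFieldType) (m : nat) (u : 'rV[R]_m) (eps : R)
  (p x : 'rV[R]_m) : Prop :=
  in_P p /\ in_simplex x /\
  (forall p', in_P p' -> principal_util u p' x <= principal_util u p x + eps) /\
  (forall x', in_simplex x' -> agent_util u p x' <= agent_util u p x + eps).

(* Since 1 - u lies in P, the principal's deviation to it shows that the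
   agent's payoff <u + p, x> is at most <1, x> + eps = 1 + eps; the agent's
   deviation to a vertex of the simplex then bounds every coordinate of
   u + p by 1 + 2 eps.  Hence z := p - (1 - u) has coordinates at most 2 eps,
   and its coordinates sum to 0 because both p and 1 - u lie in P.  A vector
   with zero sum has l1 norm twice the sum of its positive parts, at most
   2 m (2 eps). *)
From HB Require Import structures.
From mathcomp Require Import all_boot all_order all_algebra.
From mathcomp Require Import lra.
Set Implicit Arguments.
Unset Strict Implicit.
Unset Printing Implicit Defensive.
Import Order.TTheory GRing.Theory Num.Theory.
Local Open Scope ring_scope.

Lemma dotv_onesl (R : realFieldType) (m : nat) (a : 'rV[R]_m) :
  dotv (ones R m) a = \sum_(i < m) a 0 i.
Proof. by apply: eq_bigr => i _; rewrite mxE mul1r. Qed.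

Lemma dotv_deltar (R : realFieldType) (m : nat) (a : 'rV[R]_m) (i : 'I_m) :
  dotv a (delta_mx 0 i) = a 0 i.
Proof.
rewrite /dotv (bigD1 i) //= big1 => [|j /negbTE ji]; last first.
  by rewrite mxE ji andbF mulr0.
by rewrite mxE !eqxx mulr1 addr0.
Qed.

Lemma delta_in_simplex (R : realFieldType) (m : nat) (i : 'I_m) :
  in_simplex (delta_mx 0 i : 'rV[R]_m).
Proof.
split=> [j|]; first by rewrite mxE ler0n.
have := dotv_deltar (ones R m) i; rewrite /dotv mxE => <-.
by apply: eq_bigr => j _; rewrite [ones R m 0 j]mxE mul1r.
Qed.

Lemma ones_sub_in_P (R : realFieldType) (m : nat) (u : 'rV[R]_m) :
  (forall i, -1 <= u 0 i <= 1) -> \sum_(i < m) u 0 i = 0 ->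
  in_P (ones R m - u).
Proof.
move=> u_bnd u_sum0; split=> [i|].
  by rewrite !mxE; have /andP[] := u_bnd i => *; apply/andP; split; lra.
rewrite dotv_onesl (eq_bigr (fun i => 1 - u 0 i)) => [|i _]; last by rewrite !mxE.
by rewrite sumrB u_sum0 subr0 sumr_const card_ord.
Qed.

Lemma in_P_sub_sum0 (R : realFieldType) (m : nat) (p q : 'rV[R]_m) :
  in_P p -> in_P q -> \sum_(i < m) (p - q) 0 i = 0.
Proof.
move=> [_ p_sum] [_ q_sum].
rewrite dotv_onesl in p_sum; rewrite dotv_onesl in q_sum.
rewrite (eq_bigr (fun i => p 0 i - q 0 i)) => [|i _]; last by rewrite !mxE.
by rewrite sumrB p_sum q_sum subrr.
Qed.

(* |z i| <= 2 c - z i for each i, and the right-hand sides sum to 2 m c. *)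
Lemma norm1_le_sum0 (R : realFieldType) (m : nat) (z : 'rV[R]_m) (c : R) :
  0 <= c -> (forall i, z 0 i <= c) -> \sum_(i < m) z 0 i = 0 ->
  norm1 z <= 2 * m%:R * c.
Proof.
move=> c_ge0 z_le z_sum0.
apply: le_trans (_ : \sum_(i < m) (2 * c - z 0 i) <= _).
  apply: ler_sum => i _; have := z_le i.
  by case: (lerP 0 (z 0 i)) => [/ger0_norm|/ltr0_norm] ->; lra.
by rewrite sumrB z_sum0 subr0 sumr_const card_ord -mulr_natr; lra.
Qed.

Section EpsNash.

Variables (R : realFieldType) (m : nat) (u : 'rV[R]_m) (eps : R).
Variables (p x : 'rV[R]_m).
Hypothesis pxNE : eps_Nash u eps p x.

Lemma eps_Nash_eps_ge0 : 0 <= eps.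
Proof.
case: pxNE => _ [x_simplex [_ agent_dev]].
by have := agent_dev x x_simplex; rewrite /agent_util; lra.
Qed.

Lemma eps_Nash_principal_dev (p' : 'rV[R]_m) :
  in_P p' -> dotv (u + p) x <= dotv (u + p') x + eps.
Proof.
case: pxNE => _ [_ [principal_dev _]] /principal_dev.
by rewrite /principal_util; lra.
Qed.

Lemma eps_Nash_agent_dev (i : 'I_m) : (u + p) 0 i <= dotv (u + p) x + eps.
Proof.
case: pxNE => _ [_ [_ agent_dev]].
by have := agent_dev _ (delta_in_simplex R i); rewrite /agent_util dotv_deltar.
Qed.

End EpsNash.

Theorem lemma5p1 (R : realFieldType) (m : nat) (u : 'rV[R]_m) (eps : R)
  (hu : forall i, -1 <= u 0 i <= 1) (hu0 : dotv (ones R m) u = 0)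
  (p x : 'rV[R]_m) (hNE : eps_Nash u eps p x) :
  exists z : 'rV[R]_m, p = ones R m - u + z /\ norm1 z <= 4 * m%:R * eps.
Proof.
rewrite dotv_onesl in hu0.
have q_in_P := ones_sub_in_P hu hu0.
have x_sum1 : dotv (ones R m) x = 1.
  by case: hNE => _ [[_ x_sum] _]; rewrite dotv_onesl.
have value_le : dotv (u + p) x <= 1 + eps.
  have := eps_Nash_principal_dev hNE q_in_P.
  by rewrite subrKC x_sum1.
have z_le i : (p - (ones R m - u)) 0 i <= 2 * eps.
  have := eps_Nash_agent_dev hNE i; rewrite !mxE; lra.
exists (p - (ones R m - u)); split; first by rewrite addrC subrK.
have -> : 4 * m%:R * eps = 2 * m%:R * (2 * eps) by lra.
apply: norm1_le_sum0 z_le (in_P_sub_sum0 _ q_in_P); last by case: hNE.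
by have := eps_Nash_eps_ge0 hNE; lra.
Qed.
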